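(* Let $P=\{\mathbf{u}\in\mathbb{R}^n:\ell_j(\mathbf{u}):=\langle\mathbf{u},\mathbf{v}_j\rangle-\lambda_j\ge0,\ j=1,\dots,m\}$ and, for $i=1,2,\dots$, let $P^{(i)}=\{\mathbf{u}:\ell^{(i)}_j(\mathbf{u}):=\langle\mathbf{u},\mathbf{v}_j\rangle-\lambda^{(i)}_j\ge0,\ j=1,\dots,m\}$ be polytopes, where all these descriptions are non-redundant (each half-space bounds a distinct facet) and the $\mathbf{v}_j\in\mathbb{Z}^n$ are primitive. If $P^{(i)}$ converges to $P$ with respect to the Hausdorff distance, then $\lambda^{(i)}_j-\lambda_j\to0$ as $i\to\infty$ for each $j$.
   Context: The Hausdorff distance between subsets $Q_1,Q_2\subset\mathbb{R}^n$ is $\max\{\sup_{q_1\in Q_1}\inf_{q_2\in Q_2}d(q_1,q_2),\ \sup_{q_2\in Q_2}\inf_{q_1\in Q_1}d(q_1,q_2)\}$ with $d$ the Euclidean distance. *)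

From HB Require Import structures.
From mathcomp Require Import all_boot all_order all_algebra.
From mathcomp Require Import boolp classical_sets reals topology normedtype sequences.
Set Implicit Arguments. Unset Strict Implicit. Unset Printing Implicit Defensive.
Import Order.TTheory GRing.Theory Num.Theory.
Local Open Scope classical_set_scope.
Local Open Scope ring_scope.

Section Defs.
Variables (R : realType) (n m : nat).

Definition primitive (w : 'I_n -> int) : Prop :=
  \big[gcdn/0%N]_(k < n) `|w k|%N = 1%N.

Definition ipz (w : 'I_n -> int) (u : 'rV[R]_n) : R :=
  \sum_(k < n) (w k)%:~R * u ord0 k.

Definition ell (v : 'I_m -> 'I_n -> int) (lam : 'I_m -> R) (j : 'I_m)
  (u : 'rV[R]_n) : R := ipz (v j) u - lam j.

Definition hpoly (v : 'I_m -> 'I_n -> int) (lam : 'I_m -> R) : set 'rV[R]_n :=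
  [set u | forall j, 0 <= ell v lam j u].

Definition bounded_pt (A : set 'rV[R]_n) : Prop :=
  exists M : R, forall u, A u -> forall k, `|u ord0 k| <= M.

Definition face_j (v : 'I_m -> 'I_n -> int) (lam : 'I_m -> R) (j : 'I_m) :
  set 'rV[R]_n := [set u | hpoly v lam u /\ ell v lam j u = 0].

(* affine dimension of F is at least d: F contains x0 and d further points
   whose differences with x0 are linearly independent *)
Definition affdim_ge (F : set 'rV[R]_n) (d : nat) : Prop :=
  exists (x0 : 'rV[R]_n) (p : 'I_d -> 'rV[R]_n),
    F x0 /\ (forall k, F (p k)) /\ row_free (\matrix_(k < d) (p k - x0)).

(* the description is non-redundant: every half-space bounds a facet
   (a face of dimension n-1; it lies in the hyperplane l_j = 0, v_j <> 0,
   so its dimension is at most n-1) and these facets are pairwise distinct *)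
Definition nonredundant (v : 'I_m -> 'I_n -> int) (lam : 'I_m -> R) : Prop :=
  (forall j, affdim_ge (face_j v lam j) n.-1) /\
  (forall j k, j != k -> face_j v lam j <> face_j v lam k).

Definition polytope_desc (v : 'I_m -> 'I_n -> int) (lam : 'I_m -> R) : Prop :=
  bounded_pt (hpoly v lam) /\ nonredundant v lam.

End Defs.

Section Haus.
Variables (R : realType) (n : nat).

Definition edist (x y : 'rV[R]_n) : R :=
  Num.sqrt (\sum_(k < n) (x ord0 k - y ord0 k) ^+ 2).

(* Hausdorff distance (real-valued; used on nonempty bounded sets) *)
Definition hausdorff (A B : set 'rV[R]_n) : R :=
  Num.max (sup [set inf [set edist a b | b in B] | a in A])
          (sup [set inf [set edist a b | a in A] | b in B]).
End Haus.

(** The value [lambda_j] is recovered from any point [x] of the [j]-th facet of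
   [P] as [<x, v_j>], and a point [y] of [P^(i)] within Hausdorff distance [h]
   of [x] satisfies [<y, v_j> >= lambda^(i)_j].  Since [<., v_j>] is Lipschitz
   with constant [|v_j|_1], this gives [lambda^(i)_j - lambda_j <= |v_j|_1 h];
   exchanging the roles of [P] and [P^(i)] bounds [|lambda^(i)_j - lambda_j|]
   by [|v_j|_1] times the Hausdorff distance. *)

From Pilot Require Import Defs.
From HB Require Import structures.
From mathcomp Require Import all_boot all_order all_algebra.
From mathcomp Require Import boolp classical_sets reals topology normedtype sequences.
From mathcomp Require Import lra.
Import Order.TTheory GRing.Theory Num.Theory.
Import numFieldNormedType.Exports.
Local Open Scope classical_set_scope.
Local Open Scope ring_scope.

Section Euclidean.
Context {R : realType} {n : nat}.
Implicit Types (x y : 'rV[R]_n) (A B : set 'rV[R]_n).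

Lemma edist_ge0 x y : 0 <= Defs.edist x y.
Proof. exact: sqrtr_ge0. Qed.

Lemma edistC x y : Defs.edist x y = Defs.edist y x.
Proof.
by rewrite /Defs.edist; congr Num.sqrt; apply: eq_bigr => k _; rewrite -opprB sqrrN.
Qed.

Lemma coord_le_edist x y k : `|x ord0 k - y ord0 k| <= Defs.edist x y.
Proof.
rewrite /Defs.edist -sqrtr_sqr ler_sqrt; last by apply: sumr_ge0 => i _; rewrite sqr_ge0.
by rewrite (bigD1 k) //= lerDl; apply: sumr_ge0 => i _; rewrite sqr_ge0.
Qed.

Definition l1norm (w : 'I_n -> int) : R := \sum_(k < n) `|(w k)%:~R : R|.

Lemma l1norm_ge0 (w : 'I_n -> int) : 0 <= l1norm w.
Proof. exact: sumr_ge0. Qed.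

Lemma ipz_lipschitz (w : 'I_n -> int) x y :
  ipz w x - ipz w y <= l1norm w * Defs.edist x y.
Proof.
rewrite /ipz -sumrB /l1norm mulr_suml.
apply: le_trans (ler_norm _) _; apply: le_trans (ler_norm_sum _ _ _) _.
apply: ler_sum => k _; rewrite -mulrBr normrM; apply: ler_wpM2l => //.
exact: coord_le_edist.
Qed.

Lemma edist_bounded A B : bounded_pt A -> bounded_pt B ->
  exists M, forall a b, A a -> B b -> Defs.edist a b <= M.
Proof.
move=> [Ma HA] [Mb HB]; exists (\sum_(k < n) (Ma + Mb) ^+ 2 + 1) => a b Aa Bb.
set T := \sum_(k < n) _ ^+ 2.
pose S := \sum_(k < n) (a ord0 k - b ord0 k) ^+ 2.
have S0 : 0 <= S by apply: sumr_ge0 => k _; rewrite sqr_ge0.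
have leST : S <= T.
  apply: ler_sum => k _.
  move: (HA a Aa k) (HB b Bb k); rewrite !ler_norml => /andP[? ?] /andP[? ?].
  nra.
rewrite /Defs.edist -/S -(ger0_norm (_ : 0 <= T + 1)); last lra.
by rewrite -sqrtr_sqr ler_sqrt ?sqr_ge0 //; nra.
Qed.

Lemma hausdorffC A B : hausdorff A B = hausdorff B A.
Proof.
rewrite /hausdorff maxC.
by congr Num.max; congr sup; apply: eq_imagel => x _; congr inf;
  apply: eq_imagel => y _; apply: edistC.
Qed.

(* Needs [B] nonempty and the distances bounded: otherwise the [inf] and
   [sup] defining [hausdorff] are junk values. *)
Lemma hausdorff_approx {A B a} eps : bounded_pt A -> bounded_pt B ->
  B !=set0 -> A a -> 0 < eps ->
  exists2 b, B b & Defs.edist a b < hausdorff A B + eps.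
Proof.
move=> bA bB [b0 Bb0] Aa eps_gt0.
have [M HM] := edist_bounded _ _ bA bB.
have inf_ok a' : A a' -> has_inf [set Defs.edist a' b | b in B].
  move=> Aa'; split; first by exists (Defs.edist a' b0), b0.
  by exists 0 => _ [b _ <-]; apply: edist_ge0.
have [_ [b Bb <-] near_inf] := inf_adherent eps_gt0 (inf_ok a Aa).
exists b => //; apply: (lt_le_trans near_inf); rewrite lerD2r.
rewrite /hausdorff le_max; apply/orP; left; apply: ub_le_sup; last by exists a.
exists M => _ [a' Aa' <-].
apply: le_trans (ge_inf (inf_ok a' Aa').2 _) (HM _ _ Aa' Bb0).
by exists b0.
Qed.

End Euclidean.

Section Offsets.
Variables (R : realType) (n m : nat) (v : 'I_m -> 'I_n -> int).
Implicit Types lam mu : 'I_m -> R.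

Lemma polytope_face_nonempty {lam} j : polytope_desc v lam -> face_j v lam j !=set0.
Proof. by move=> [_ [facets _]]; have [x [_ [Fx _]]] := facets j; exists x. Qed.

Lemma offset_le_face_dist {lam mu j x y} :
  face_j v mu j x -> hpoly v lam y -> lam j - mu j <= l1norm (v j) * Defs.edist y x.
Proof.
move=> [_ ell_x0] /(_ j) ell_y_ge0; apply: le_trans (ipz_lipschitz _ _ _).
by move: ell_x0 ell_y_ge0; rewrite /ell; lra.
Qed.

Lemma offset_le_hausdorff lam mu j : polytope_desc v lam -> polytope_desc v mu ->
  lam j - mu j <= l1norm (v j) * hausdorff (hpoly v mu) (hpoly v lam).
Proof.
move=> Plam Pmu; have [x Fx] := polytope_face_nonempty j Pmu.
have Pne : hpoly v lam !=set0.
  by have [y [Py _]] := polytope_face_nonempty j Plam; exists y.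
apply/ler_addgt0Pr => eps eps_gt0.
set C := l1norm (v j); have C0 : 0 <= C := l1norm_ge0 _.
have [y Py close] := hausdorff_approx (eps / (C + 1)) Pmu.1 Plam.1 Pne Fx.1
  (divr_gt0 eps_gt0 (ltr_wpDl C0 ltr01)).
apply: le_trans (offset_le_face_dist Fx Py) _; rewrite -/C edistC.
set d := Defs.edist x y in close *; set h := hausdorff _ _ in close *.
have Cd : C * d <= C * h + C * (eps / (C + 1)).
  by rewrite -mulrDr ler_wpM2l // ltW.
have Ceps : C * (eps / (C + 1)) <= eps.
  by rewrite mulrA ler_pdivrMr; [nra | lra].
lra.
Qed.

Lemma offset_dist_le_hausdorff lam mu j : polytope_desc v lam -> polytope_desc v mu ->
  `|mu j - lam j| <= l1norm (v j) * hausdorff (hpoly v mu) (hpoly v lam).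
Proof.
move=> Plam Pmu; rewrite ler_norml lerNl opprB offset_le_hausdorff //=.
by rewrite hausdorffC offset_le_hausdorff.
Qed.

End Offsets.

Theorem lemma7p2 (R : realType) (n m : nat) (v : 'I_m -> 'I_n -> int)
  (lam : 'I_m -> R) (lami : nat -> 'I_m -> R) :
  (forall j, primitive (v j)) ->
  polytope_desc v lam ->
  (forall i, polytope_desc v (lami i)) ->
  hausdorff (hpoly v (lami i)) (hpoly v lam) @[i --> \oo] --> (0:R) ->
  forall j, lami i j - lam j @[i --> \oo] --> (0:R).
Proof.
move=> _ Plam Plami haus_to0 j.
set C : R := l1norm (v j).
have Ch_to0 : C * hausdorff (hpoly v (lami i)) (hpoly v lam) @[i --> \oo] --> (0 : R).
  by rewrite -[0](mulr0 C); apply: cvgMl_tmp.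
have NCh_to0 : - (C * hausdorff (hpoly v (lami i)) (hpoly v lam)) @[i --> \oo] --> (0 : R).
  by rewrite -oppr0; apply: cvgN.
apply: (squeeze_cvgr _ NCh_to0 Ch_to0).
by apply: nearW => i; rewrite -ler_norml offset_dist_le_hausdorff.
Qed.
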